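(* Let $\kappa$ be an infinite cardinal. There is a $\kappa^+$-system of width $\kappa$ with no cofinal branch.
   Context: Let $\lambda$ be an infinite regular cardinal. A binary relation $R$ is tree-like if whenever $a<_Rc$ and $b<_Rc$, then $a,b$ are $R$-comparable ($a=b$, $a<_Rb$ or $b<_Ra$). A $\lambda$-system is $S=\langle\bigcup_{\alpha\in I}\{\alpha\}\times\kappa_\alpha,\mathcal{R}\rangle$ where: $I\subseteq\lambda$ is unbounded, each $\kappa_\alpha$ is a cardinal with $0<\kappa_\alpha<\lambda$ (level $S_\alpha=\{\alpha\}\times\kappa_\alpha$); $\mathcal{R}$ is a set of binary, transitive, tree-like relations on the underlying set with $0<|\mathcal{R}|<\lambda$; if $(\alpha_0,\beta_0)<_R(\alpha_1,\beta_1)$ for $R\in\mathcal{R}$ then $\alpha_0<\alpha_1$; and for all $\alpha_0<\alpha_1$ in $I$ there are $\beta_0<\kappa_{\alpha_0},\beta_1<\kappa_{\alpha_1}$, $R\in\mathcal{R}$ with $(\alpha_0,\beta_0)<_R(\alpha_1,\beta_1)$. $\mathrm{width}(S)=\max(\sup_\alpha\kappa_\alpha,|\mathcal{R}|)$. A branch through $R\in\mathcal{R}$ is a set of pairwise $R$-comparable elements; it is cofinal if it meets $S_\alpha$ for unboundedly many $\alpha\in I$; $S$ has a cofinal branch if some $R\in\mathcal{R}$ has a cofinal branch. *)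

From Stdlib Require Import Relations Wellfounded.

Definition card_le (A B : Type) : Prop :=
  exists f : A -> B, forall x y, f x = f y -> x = y.
Definition card_lt (A B : Type) : Prop := card_le A B /\ ~ card_le B A.

Definition infinite_type (K : Type) : Prop :=
  ~ (exists n : nat, card_le K {m : nat | m < n}).

Definition well_order {L : Type} (lt : L -> L -> Prop) : Prop :=
  well_founded lt /\ (forall x y z, lt x y -> lt y z -> lt x z) /\
  (forall x y, lt x y \/ x = y \/ lt y x).

(* (L, lt) is (order-isomorphic to) the successor cardinal kappa^+ of |K|:
   a well-order not injectable into K all of whose proper initial
   segments inject into K. *)
Definition is_succ_cardinal_of (K L : Type) (lt : L -> L -> Prop) : Prop :=
  well_order lt /\ (forall x : L, card_le {y : L | lt y x} K) /\ ~ card_le L K.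

(* Underlying set of a lambda-system: the disjoint union of levels
   S_alpha = {alpha} x Lev alpha over alpha in I. *)
Definition node {L : Type} (I : L -> Prop) (Lev : {a : L | I a} -> Type) : Type :=
  { a : {a : L | I a} & Lev a }.

Definition lvl {L : Type} {I : L -> Prop} {Lev : {a : L | I a} -> Type}
  (u : node I Lev) : L := proj1_sig (projT1 u).

Definition tree_like {T : Type} (R : T -> T -> Prop) : Prop :=
  forall a b c, R a c -> R b c -> a = b \/ R a b \/ R b a.

Definition is_lambda_system (L : Type) (lt : L -> L -> Prop) (I : L -> Prop)
  (Lev : {a : L | I a} -> Type) (Rs : (node I Lev -> node I Lev -> Prop) -> Prop)
  : Prop :=
  (forall x : L, exists y : L, I y /\ ~ lt y x) /\
  (forall a, inhabited (Lev a) /\ card_lt (Lev a) L) /\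
  (forall R, Rs R -> transitive _ R /\ tree_like R) /\
  (exists R, Rs R) /\ card_lt {R | Rs R} L /\
  (forall R, Rs R -> forall u v : node I Lev, R u v -> lt (lvl u) (lvl v)) /\
  (forall a0 a1 : {a : L | I a}, lt (proj1_sig a0) (proj1_sig a1) ->
     exists (b0 : Lev a0) (b1 : Lev a1) (R : node I Lev -> node I Lev -> Prop),
       Rs R /\ R (existT _ a0 b0) (existT _ a1 b1)).

(* width(S) = max(sup_alpha kappa_alpha, |R|) = |K|, i.e. |K| is the least
   upper bound of the cardinals kappa_alpha (alpha in I) and |R|. *)
Definition width_is {L : Type} {I : L -> Prop} (Lev : {a : L | I a} -> Type)
  (Rs : (node I Lev -> node I Lev -> Prop) -> Prop) (K : Type) : Prop :=
  (forall a, card_le (Lev a) K) /\ card_le {R | Rs R} K /\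
  (forall M : Type, (forall a, card_le (Lev a) M) -> card_le {R | Rs R} M ->
     card_le K M).

Definition is_branch {T : Type} (R : T -> T -> Prop) (B : T -> Prop) : Prop :=
  forall u v, B u -> B v -> u = v \/ R u v \/ R v u.

Definition is_cofinal {L : Type} (lt : L -> L -> Prop) {I : L -> Prop}
  {Lev : {a : L | I a} -> Type} (B : node I Lev -> Prop) : Prop :=
  forall x : L, exists u, B u /\ ~ lt (lvl u) x.

Definition has_cofinal_branch {L : Type} (lt : L -> L -> Prop) {I : L -> Prop}
  {Lev : {a : L | I a} -> Type} (Rs : (node I Lev -> node I Lev -> Prop) -> Prop)
  : Prop :=
  exists R, Rs R /\ exists B : node I Lev -> Prop, is_branch R B /\ is_cofinal lt B.

(* Take every level to be a copy of kappa with two distinguished points [bot]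
   and [top], and, using injections [e_b] of the initial segments of kappa^+
   into kappa, let the relation [R_i] send the [bot]-point of level [a] to the
   [top]-point of level [b] whenever [e_b(a) = i]. These kappa relations are
   transitive because no [R_i]-chain has three points, tree-like because [e_b]
   is injective, and they connect every pair of levels. A cofinal branch would contain such a chain,
   since kappa^+ has no largest element. *)

From Stdlib Require Import Arith Lia List Relations Wellfounded
  Classical ClassicalEpsilon FunctionalExtensionality ProofIrrelevance.

Lemma card_le_refl (A : Type) : card_le A A.
Proof. exists (fun x => x). auto. Qed.

Lemma card_le_trans (A B C : Type) : card_le A B -> card_le B C -> card_le A C.
Proof.
  intros [f Hf] [g Hg]. exists (fun x => g (f x)). auto.
Qed.

Lemma card_le_family (A B : Type) (P : A -> Type) :
  (forall x, card_le (P x) B) ->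
  exists e : forall x, P x -> B, forall x u v, e x u = e x v -> u = v.
Proof.
  intro H. exists (fun x => proj1_sig (constructive_indefinite_description _ (H x))).
  intro x. exact (proj2_sig (constructive_indefinite_description _ (H x))).
Qed.

Lemma well_founded_irrefl (A : Type) (R : A -> A -> Prop) :
  well_founded R -> forall x, ~ R x x.
Proof.
  intros W x. induction (W x) as [x _ IH]. intro H. exact (IH x H H).
Qed.

Section InfiniteTypes.
Variable K : Type.
Hypothesis K_infinite : infinite_type K.

Lemma infinite_not_in_list (l : list K) : exists x, ~ In x l.
Proof.
  apply NNPP. intro Hcover.
  assert (Hidx : forall x, exists i, i < length l /\ nth_error l i = Some x).
  { intro x. assert (Hx : In x l) by (apply NNPP; eauto).
    destruct (In_nth_error _ _ Hx) as [i Hi]. exists i. split; auto.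
    apply nth_error_Some. rewrite Hi. discriminate. }
  apply K_infinite. exists (length l).
  exists (fun x => let (i, Hi) := constructive_indefinite_description _ (Hidx x) in
                   exist (fun m => m < length l) i (proj1 Hi)).
  intros x y E.
  destruct (constructive_indefinite_description _ (Hidx x)) as [i Hx].
  destruct (constructive_indefinite_description _ (Hidx y)) as [j Hy].
  injection E as Eij. subst j. destruct Hx as [_ Hx], Hy as [_ Hy]. congruence.
Qed.

Section FreshSequence.
Variable fresh : list K -> K.
Hypothesis fresh_not_in : forall l, ~ In (fresh l) l.

Fixpoint fresh_prefix (n : nat) : list K :=
  match n with 0 => nil | S n => fresh (fresh_prefix n) :: fresh_prefix n end.

Lemma fresh_in_prefix n m : n < m -> In (fresh (fresh_prefix n)) (fresh_prefix m).
Proof.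
  induction m as [|m IH]; intro H; [lia|]. simpl.
  destruct (Nat.eq_dec n m) as [->|]; [left; auto | right; apply IH; lia].
Qed.

Lemma fresh_sequence_inj n m :
  fresh (fresh_prefix n) = fresh (fresh_prefix m) -> n = m.
Proof.
  intro E. destruct (Nat.lt_total n m) as [H|[H|H]]; auto; exfalso.
  - apply (fresh_not_in (fresh_prefix m)). rewrite <- E. now apply fresh_in_prefix.
  - apply (fresh_not_in (fresh_prefix n)). rewrite E. now apply fresh_in_prefix.
Qed.

End FreshSequence.

Lemma infinite_nat_inj : exists s : nat -> K, forall n m, s n = s m -> n = m.
Proof.
  destruct (choice (fun l x => ~ In x l) infinite_not_in_list) as [fresh Hfresh].
  exists (fun n => fresh (fresh_prefix fresh n)). exact (fresh_sequence_inj fresh Hfresh).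
Qed.

Lemma infinite_two_points : exists x y : K, x <> y.
Proof.
  destruct infinite_nat_inj as [s Hs]. exists (s 0), (s 1).
  intro E. apply Hs in E. discriminate.
Qed.

(* Hilbert's hotel along an injected copy of nat: [None] goes to [s 0] and
   [s n] moves to [s (n+1)]. *)
Lemma card_le_option_infinite : card_le (option K) K.
Proof.
  destruct infinite_nat_inj as [s Hs].
  set (shift := fun k => match excluded_middle_informative (exists n, s n = k) with
    | left H => s (S (proj1_sig (constructive_indefinite_description _ H)))
    | right _ => k end).
  assert (Hshift : forall k, (exists n, k = s n /\ shift k = s (S n))
                             \/ ((forall n, s n <> k) /\ shift k = k)).
  { intro k. unfold shift. destruct (excluded_middle_informative _) as [H|H].
    - left. destruct (constructive_indefinite_description _ H) as [n Hn]. eauto.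
    - right. split; auto. intros n Hn. eauto. }
  exists (fun o => match o with None => s 0 | Some k => shift k end).
  intros [x|] [y|] E; auto.
  - destruct (Hshift x) as [[n [-> Hx]]|[Nx Hx]];
    destruct (Hshift y) as [[m [-> Hy]]|[Ny Hy]]; rewrite Hx, Hy in E.
    + apply Hs in E. congruence.
    + destruct (Ny _ E).
    + destruct (Nx _ (eq_sym E)).
    + congruence.
  - destruct (Hshift x) as [[n [_ Hx]]|[Nx Hx]]; rewrite Hx in E.
    + apply Hs in E. discriminate.
    + destruct (Nx _ (eq_sym E)).
  - destruct (Hshift y) as [[n [_ Hy]]|[Ny Hy]]; rewrite Hy in E.
    + apply Hs in E. discriminate.
    + destruct (Ny _ E).
Qed.

End InfiniteTypes.

Section SuccessorCardinal.
Variables (K L : Type) (lt : L -> L -> Prop).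
Hypothesis L_succ : is_succ_cardinal_of K L lt.

(* If [x] were largest, [L] would inject into [option {y | lt y x}], which
   has the size of [K] when [K] is infinite. *)
Lemma succ_cardinal_no_max : infinite_type K -> forall x, exists y, lt x y.
Proof.
  destruct L_succ as [[_ [_ Htri]] [Hseg HL]].
  intros Hinf x. apply NNPP. intro Hmax.
  apply HL. apply card_le_trans with (option {y | lt y x}).
  - exists (fun y => match excluded_middle_informative (lt y x) with
                     | left H => Some (exist _ y H) | right _ => None end).
    intros y z. destruct (excluded_middle_informative (lt y x)) as [Hy|Hy];
      destruct (excluded_middle_informative (lt z x)) as [Hz|Hz];
      intro E; try discriminate.
    + injection E. auto.
    + destruct (Htri y x) as [?|[->|H1]]; [contradiction| |destruct Hmax; eauto].
      destruct (Htri z x) as [?|[->|H2]]; [contradiction|auto|destruct Hmax; eauto].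
  - destruct (Hseg x) as [f Hf].
    apply card_le_trans with (option K); [|exact (card_le_option_infinite K Hinf)].
    exists (option_map f). intros [y|] [z|] E; try discriminate; auto.
    injection E as E. f_equal. auto.
Qed.

(* Transfinite recursion picks at each stage a value of [K] not yet used;
   since [L] does not inject into [K], the values run out at some stage [a],
   and [k] is then sent to the stage below [a] at which it was picked. *)
Lemma succ_cardinal_card_le : K -> card_le K L.
Proof.
  intro k0. destruct L_succ as [[W [_ Htri]] [_ HL]].
  set (pick := fun P : K -> Prop =>
    match excluded_middle_informative (exists k, P k) with
    | left H => Some (proj1_sig (constructive_indefinite_description _ H))
    | right _ => None end).
  assert (Hpick : forall P, (exists k, P k) -> exists k, pick P = Some k /\ P k).
  { intros P H. unfold pick. destruct (excluded_middle_informative _) as [H'|]; [|contradiction].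
    destruct (constructive_indefinite_description _ H') as [k Hk]. eauto. }
  set (f := Fix W (fun _ => option K)
              (fun a rec => pick (fun k => forall b (H : lt b a), rec b H <> Some k))).
  assert (Hf : forall a, f a = pick (fun k => forall b, lt b a -> f b <> Some k)).
  { intro a. unfold f. rewrite Fix_eq; [reflexivity|].
    intros x g h Hgh. replace h with g; [reflexivity|].
    apply functional_extensionality_dep; intro y.
    apply functional_extensionality_dep; auto. }
  assert (Hexhaust : exists a, forall k, exists b, lt b a /\ f b = Some k).
  { apply NNPP. intro Hn. apply HL.
    assert (Hnew : forall a, exists k, f a = Some k /\ forall b, lt b a -> f b <> Some k).
    { intro a. rewrite Hf. apply Hpick. apply NNPP. intro Hno. apply Hn. exists a.
      intro k. apply NNPP. intro Hk. apply Hno. exists k. intros b Hb E. apply Hk. eauto. }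
    exists (fun a => match f a with Some k => k | None => k0 end).
    intros a b E. destruct (Hnew a) as [ka [Ea Na]]. destruct (Hnew b) as [kb [Eb Nb]].
    rewrite Ea, Eb in E. subst kb.
    destruct (Htri a b) as [H|[H|H]]; auto; exfalso.
    - apply (Nb a H). congruence.
    - apply (Na b H). congruence. }
  destruct Hexhaust as [a Ha].
  exists (fun k => proj1_sig (constructive_indefinite_description _ (Ha k))).
  intros x y E.
  destruct (constructive_indefinite_description _ (Ha x)) as [bx Hx].
  destruct (constructive_indefinite_description _ (Ha y)) as [by' Hy].
  simpl in E. subst by'. destruct Hx as [_ Hx], Hy as [_ Hy]. congruence.
Qed.

End SuccessorCardinal.

Section TwoPointSystem.
Variables (K L : Type) (lt : L -> L -> Prop) (bot top : K).
Hypothesis bot_neq_top : bot <> top.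
Variable e : forall b : L, {a : L | lt a b} -> K.
Hypothesis e_inj : forall b x y, e b x = e b y -> x = y.

Local Notation vertex := (node (fun _ : L => True) (fun _ => K)).

Definition edge (i : K) (u v : vertex) : Prop :=
  projT2 u = bot /\ projT2 v = top /\
  exists H : lt (lvl u) (lvl v), e (lvl v) (exist _ (lvl u) H) = i.

Definition edges (R : vertex -> vertex -> Prop) : Prop := exists i, R = edge i.

Lemma edge_lvl i u v : edge i u v -> lt (lvl u) (lvl v).
Proof. intros [_ [_ [H _]]]. exact H. Qed.

Lemma edge_edge_False i u v w : edge i u v -> edge i v w -> False.
Proof. intros [_ [Hv _]] [Hv' _]. apply bot_neq_top. congruence. Qed.

Lemma edge_transitive i : transitive _ (edge i).
Proof. intros u v w Huv Hvw. destruct (edge_edge_False _ _ _ _ Huv Hvw). Qed.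

Lemma edge_tree_like i : tree_like (edge i).
Proof.
  intros [[xa []] ka] [[xb []] kb] c [Ha [_ [Hac Eac]]] [Hb [_ [Hbc Ebc]]].
  left. rewrite <- Ebc in Eac. apply e_inj, (f_equal (@proj1_sig _ _)) in Eac.
  change (xa = xb) in Eac. simpl in Ha, Hb. subst. reflexivity.
Qed.

Lemma edge_connects (a0 a1 : {a : L | True}) (H : lt (proj1_sig a0) (proj1_sig a1)) :
  edge (e _ (exist _ _ H)) (existT _ a0 bot) (existT _ a1 top).
Proof. repeat split. exists H. reflexivity. Qed.

Lemma card_le_edges : card_le {R | edges R} K.
Proof.
  exists (fun R : {R | edges R} =>
            proj1_sig (constructive_indefinite_description _ (proj2_sig R))).
  intros [R1 H1] [R2 H2]. simpl.
  destruct (constructive_indefinite_description _ H1) as [i1 E1].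
  destruct (constructive_indefinite_description _ H2) as [i2 E2].
  simpl. intros <-. subst. f_equal. apply proof_irrelevance.
Qed.

Hypothesis lt_wo : well_order lt.
Hypothesis K_le_L : card_le K L.
Hypothesis not_L_le_K : ~ card_le L K.

Lemma two_point_lambda_system :
  is_lambda_system L lt (fun _ => True) (fun _ => K) edges.
Proof.
  destruct lt_wo as [W _].
  split; [|split; [|split; [|split; [|split; [|split]]]]].
  - intro x. exists x. split; [exact I | apply well_founded_irrefl, W].
  - intro a. split; [exact (inhabits bot) | split; assumption].
  - intros R [i ->]. split; [apply edge_transitive | apply edge_tree_like].
  - exists (edge bot), bot. reflexivity.
  - split.
    + apply card_le_trans with K; [apply card_le_edges | assumption].
    + intro H. apply not_L_le_K. apply card_le_trans with {R | edges R};
        [assumption | apply card_le_edges].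
  - intros R [i ->]. apply edge_lvl.
  - intros a0 a1 H. exists bot, top, (edge (e _ (exist _ _ H))).
    split; [eexists; reflexivity | apply edge_connects].
Qed.

Lemma two_point_width : width_is (fun _ : {a : L | True} => K) edges K.
Proof.
  split; [|split]; [intro; apply card_le_refl | apply card_le_edges |].
  destruct K_le_L as [g _]. intros M HM _. exact (HM (exist _ (g bot) I)).
Qed.

Hypothesis L_no_max : forall x, exists y, lt x y.

Lemma two_point_no_cofinal_branch : ~ has_cofinal_branch lt edges.
Proof.
  destruct lt_wo as [W [Htrans Htri]].
  pose proof (well_founded_irrefl _ _ W) as Hirr.
  intros [R [[i ->] [B [Hbranch Hcof]]]].
  assert (Hup : forall u, B u -> exists v, B v /\ edge i u v).
  { intros u Hu. destruct (L_no_max (lvl u)) as [x Hx].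
    destruct (Hcof x) as [v [Hv Hvx]]. exists v. split; [assumption|].
    assert (Huv : lt (lvl u) (lvl v)).
    { destruct (Htri (lvl v) x) as [H|[H|H]]; [contradiction | congruence | eauto]. }
    destruct (Hbranch u v Hu Hv) as [->|[H|H]]; [| assumption |]; exfalso.
    - exact (Hirr _ Huv).
    - apply (Hirr (lvl u)). eauto using edge_lvl. }
  destruct K_le_L as [g _]. destruct (Hcof (g bot)) as [u [Hu _]].
  destruct (Hup u Hu) as [v [Hv Huv]]. destruct (Hup v Hv) as [w [_ Hvw]].
  exact (edge_edge_False _ _ _ _ Huv Hvw).
Qed.

End TwoPointSystem.

Theorem mainTheorem11 :
  forall (K : Type), infinite_type K ->
  forall (L : Type) (lt : L -> L -> Prop), is_succ_cardinal_of K L lt ->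
  exists (I : L -> Prop) (Lev : {a : L | I a} -> Type)
         (Rs : (node I Lev -> node I Lev -> Prop) -> Prop),
    is_lambda_system L lt I Lev Rs /\ width_is Lev Rs K /\
    ~ has_cofinal_branch lt Rs.
Proof.
  intros K Hinf L lt HS.
  destruct (infinite_two_points K Hinf) as [bot [top Hbt]].
  pose proof (succ_cardinal_card_le K L lt HS bot) as HKL.
  pose proof (succ_cardinal_no_max K L lt HS Hinf) as Hnomax.
  destruct HS as [Hwo [Hseg HLK]].
  destruct (card_le_family L K _ Hseg) as [e He].
  exists (fun _ => True), (fun _ => K), (edges K L lt bot top e).
  split; [|split].
  - apply two_point_lambda_system; assumption.
  - apply two_point_width; assumption.
  - apply two_point_no_cofinal_branch; assumption.
Qed.
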